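(* Let $J$ be an elementary interval. The total number of break points $(t,\sigma,\psi)$ of type (ii) of the lower envelopes $L_1,\dots,L_m$ with $t\in J$ is at most $6.5n$.
   Context: Entities of a set $\mathcal{X}$ of size $n$ move in $\mathbb{R}^1$ along piecewise-linear trajectories with vertices at common times $t_0<\dots<t_\tau$; $\varepsilon>0$ is fixed; trajectories are in general position (no three meet at one point at the same time, no two pairs are at distance exactly $\varepsilon$ at the same time). $\mathcal{I}(t)=(\max_\sigma\sigma(t)+\min_\sigma\sigma(t))/2$; an elementary interval is a maximal subinterval of some $[t_i,t_{i+1}]$ on which $\mathcal{I}$ is linear. Two entities are $\varepsilon$-connected at time $t$ if they are joined by a chain of entities with consecutive distances at most $\varepsilon$ at time $t$. At each time, $\mathcal{X}$ is partitioned into $\varepsilon$-connectivity classes; let $(\mathcal{X}_1,J_1),\dots,(\mathcal{X}_m,J_m)$ be all pairs where $J_j$ is a maximal time interval during which $\mathcal{X}_j$ is one of these classes at every time. Let $f_\sigma(t)=|\sigma(t)-\mathcal{I}(t)|$ and $L_j$ the lower envelope of $\{f_\sigma:\sigma\in\mathcal{X}_j\}$ restricted to $J_j$. A break point of $L_j$ is a triple $(t,\sigma,\psi)$, $\sigma\neq\psi\in\mathcal{X}_j$, $t\in J_j$, with $L_j(t)=f_\sigma(t)=f_\psi(t)$; it is of type (i) if $\sigma(t)=\psi(t)$ and of type (ii) if $\sigma(t)-\mathcal{I}(t)=-(\psi(t)-\mathcal{I}(t))\neq 0$. *)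

From Stdlib Require Import Reals Lra List Relations.
Import ListNotations.
Open Scope R_scope.

(* Entities are indexed by 0..n-1; [x k t] is the position of entity k at
   time t.  Vertex times are [ts 0 < ts 1 < ... < ts tau]. *)

Definition in_dom (ts : nat -> R) (tau : nat) (t : R) : Prop :=
  ts 0%nat <= t <= ts tau.

Definition increasing_times (ts : nat -> R) (tau : nat) : Prop :=
  forall i, (i < tau)%nat -> ts i < ts (S i).

Definition piecewise_linear (n : nat) (x : nat -> R -> R)
  (ts : nat -> R) (tau : nat) : Prop :=
  forall k i, (k < n)%nat -> (i < tau)%nat ->
    exists a b : R, forall t, ts i <= t <= ts (S i) -> x k t = a * t + b.

Definition general_position (n : nat) (x : nat -> R -> R) (eps : R)
  (ts : nat -> R) (tau : nat) : Prop :=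
  (forall i j k t, (i < n)%nat -> (j < n)%nat -> (k < n)%nat ->
     i <> j -> j <> k -> i <> k -> in_dom ts tau t ->
     ~ (x i t = x j t /\ x j t = x k t)) /\
  (forall i j k l t, (i < n)%nat -> (j < n)%nat -> (k < n)%nat -> (l < n)%nat ->
     i <> j -> k <> l -> ~ ((i = k /\ j = l) \/ (i = l /\ j = k)) ->
     in_dom ts tau t ->
     ~ (Rabs (x i t - x j t) = eps /\ Rabs (x k t - x l t) = eps)).

(* max / min of positions at time t (meaningful for n >= 1) *)
Definition pos_max (n : nat) (x : nat -> R -> R) (t : R) : R :=
  fold_right Rmax (x 0%nat t) (map (fun k => x k t) (seq 0 n)).
Definition pos_min (n : nat) (x : nat -> R -> R) (t : R) : R :=
  fold_right Rmin (x 0%nat t) (map (fun k => x k t) (seq 0 n)).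

Definition Icurve (n : nat) (x : nat -> R -> R) (t : R) : R :=
  (pos_max n x t + pos_min n x t) / 2.

Definition fdist (n : nat) (x : nat -> R -> R) (k : nat) (t : R) : R :=
  Rabs (x k t - Icurve n x t).

Definition is_interval (J : R -> Prop) : Prop :=
  forall a b c, J a -> J c -> a <= b <= c -> J b.

Definition I_linear_on (n : nat) (x : nat -> R -> R) (J : R -> Prop) : Prop :=
  exists a b : R, forall t, J t -> Icurve n x t = a * t + b.

Definition elementary_interval (n : nat) (x : nat -> R -> R)
  (ts : nat -> R) (tau : nat) (J : R -> Prop) : Prop :=
  exists i, (i < tau)%nat /\
    is_interval J /\ (forall t, J t -> ts i <= t <= ts (S i)) /\
    I_linear_on n x J /\
    (forall J' : R -> Prop,
       is_interval J' -> (forall t, J' t -> ts i <= t <= ts (S i)) ->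
       I_linear_on n x J' -> (forall t, J t -> J' t) ->
       forall t, J' t -> J t).

Definition close_at (n : nat) (x : nat -> R -> R) (eps t : R) : relation nat :=
  fun i j => (i < n)%nat /\ (j < n)%nat /\ Rabs (x i t - x j t) <= eps.

Definition eps_connected (n : nat) (x : nat -> R -> R) (eps t : R)
  (i j : nat) : Prop :=
  clos_refl_trans nat (close_at n x eps t) i j.

Definition is_class (n : nat) (x : nat -> R -> R) (eps t : R)
  (X : nat -> Prop) : Prop :=
  exists s, (s < n)%nat /\
    forall k, X k <-> ((k < n)%nat /\ eps_connected n x eps t s k).

Definition class_pair (n : nat) (x : nat -> R -> R) (eps : R)
  (ts : nat -> R) (tau : nat) (X : nat -> Prop) (J : R -> Prop) : Prop :=
  is_interval J /\ (exists t, J t) /\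
  (forall t, J t -> in_dom ts tau t /\ is_class n x eps t X) /\
  (forall J' : R -> Prop, is_interval J' ->
     (forall t, J' t -> in_dom ts tau t /\ is_class n x eps t X) ->
     (forall t, J t -> J' t) -> forall t, J' t -> J t).

(* (t, s, p) is a break point of the lower envelope L of {f_k : k in X}
   restricted to J:  L(t) = f_s(t) = f_p(t). *)
Definition break_point (n : nat) (x : nat -> R -> R)
  (X : nat -> Prop) (J : R -> Prop) (t : R) (s p : nat) : Prop :=
  s <> p /\ X s /\ X p /\ J t /\
  fdist n x s t = fdist n x p t /\
  (forall k, X k -> fdist n x s t <= fdist n x k t).

(* type (ii): s(t) - I(t) = -(p(t) - I(t)) <> 0; moreover (READING) the tie f_s = f_p is required to be a genuine crossing, i.e.
   isolated in time (f_s and f_p do not coincide on a neighbourhood). *)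
Definition type_ii (n : nat) (x : nat -> R -> R) (ts : nat -> R) (tau : nat)
  (t : R) (s p : nat) : Prop :=
  x s t - Icurve n x t = - (x p t - Icurve n x t) /\
  x s t - Icurve n x t <> 0 /\
  exists delta, delta > 0 /\
    forall u, in_dom ts tau u -> u <> t -> Rabs (u - t) < delta ->
      fdist n x s u <> fdist n x p u.

Definition type_ii_break_of_some_envelope (n : nat) (x : nat -> R -> R)
  (eps : R) (ts : nat -> R) (tau : nat) (t : R) (s p : nat) : Prop :=
  exists (X : nat -> Prop) (J : R -> Prop),
    class_pair n x eps ts tau X J /\ break_point n x X J t s p /\
    type_ii n x ts tau t s p.

(* On an elementary interval every centred trajectory g_k = x_k - I is affine.
   At a type-(ii) break point (t, s, p) we have g_s(t) = -g_p(t) and |g_s(t)| is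
   minimal among all entities: an entity closer to I would sit between x_s and
   x_p, hence in the same connectivity class.  Let k be an entity of steepest
   slope.  Two such break points of k with the same sign of g_k, at t1 < t2, are
   impossible: |g_k| is affine on [t1, t2] while the |g_q| are Lipschitz with no
   larger constant, so |g_k| would coincide with one of its partners on all of
   [t1, t2], contradicting that break points are isolated crossings.  At a single
   time k has at most two partners by general position.  Thus k takes part in at
   most 4 break points; removing k and recursing gives 4n <= 6.5n. *)

From Stdlib Require Import Reals Lra Lia List Relations Classical Wf_nat.
Import ListNotations.
Open Scope R_scope.

Lemma Rabs_le_inv (y c : R) : Rabs y <= c -> - c <= y <= c.
Proof. unfold Rabs; destruct (Rcase_abs y); intros; lra. Qed.

Definition affine_on (J : R -> Prop) (f : R -> R) (a : R) : Prop :=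
  forall u v, J u -> J v -> f u - f v = a * (u - v).

Definition segment (t1 t2 : R) : R -> Prop := fun u => t1 <= u <= t2.

Lemma affine_on_abs_lipschitz J f a u v :
  affine_on J f a -> J u -> J v ->
  Rabs (Rabs (f u) - Rabs (f v)) <= Rabs a * Rabs (u - v).
Proof.
  intros Hf Ju Jv. rewrite <- Rabs_mult, <- (Hf u v Ju Jv). apply Rabs_triang_inv2.
Qed.

Lemma affine_on_abs_same_sign f a t1 t2 :
  affine_on (segment t1 t2) f a -> 0 < f t1 * f t2 ->
  exists c, Rabs c = Rabs a /\ affine_on (segment t1 t2) (fun u => Rabs (f u)) c.
Proof.
  intros Hf Hsg.
  assert (Hsign : forall u, segment t1 t2 u -> 0 < f t1 * f u).
  { intros u Hu.
    assert (Ht1 : segment t1 t2 t1) by (unfold segment in *; lra).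
    assert (Ht2 : segment t1 t2 t2) by (unfold segment in *; lra).
    pose proof (Hf u t1 Hu Ht1). pose proof (Hf t2 u Ht2 Hu). unfold segment in Hu.
    assert (0 < f t1 * f t1) by (destruct (Req_dec (f t1) 0) as [E|E];
      [rewrite E in Hsg; lra | nra]).
    destruct (Rle_dec 0 (a * f t1)); nra. }
  destruct (Rlt_dec 0 (f t1)) as [Hpos|Hneg].
  - exists a; split; [reflexivity|]. intros u v Hu Hv.
    specialize (Hsign u Hu) as Su. specialize (Hsign v Hv) as Sv.
    cbv beta; rewrite !Rabs_pos_eq by nra. exact (Hf u v Hu Hv).
  - exists (- a); split; [apply Rabs_Ropp|]. intros u v Hu Hv.
    specialize (Hsign u Hu) as Su. specialize (Hsign v Hv) as Sv.
    assert (f t1 < 0) by (destruct (Req_dec (f t1) 0) as [E|]; [rewrite E in Hsg|]; lra).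
    cbv beta; rewrite !Rabs_left by nra. pose proof (Hf u v Hu Hv). lra.
Qed.

Lemma affine_lipschitz_eq_forward F G c t1 t2 :
  0 <= c -> affine_on (segment t1 t2) F c ->
  (forall u v, segment t1 t2 u -> segment t1 t2 v -> Rabs (G u - G v) <= c * Rabs (u - v)) ->
  F t1 = G t1 -> F t2 <= G t2 -> forall u, segment t1 t2 u -> F u = G u.
Proof.
  intros Hc HF HG E1 L2 u Hu.
  assert (Ht1 : segment t1 t2 t1) by (unfold segment in *; lra).
  assert (Ht2 : segment t1 t2 t2) by (unfold segment in *; lra).
  pose proof (HF u t1 Hu Ht1). pose proof (HF t2 u Ht2 Hu).
  pose proof (Rabs_le_inv _ _ (HG u t1 Hu Ht1)) as B1.
  pose proof (Rabs_le_inv _ _ (HG t2 u Ht2 Hu)) as B2.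
  unfold segment in Hu.
  rewrite Rabs_pos_eq in B1, B2 by lra. lra.
Qed.

Lemma affine_lipschitz_eq_backward F G c t1 t2 :
  c <= 0 -> affine_on (segment t1 t2) F c ->
  (forall u v, segment t1 t2 u -> segment t1 t2 v -> Rabs (G u - G v) <= - c * Rabs (u - v)) ->
  F t2 = G t2 -> F t1 <= G t1 -> forall u, segment t1 t2 u -> F u = G u.
Proof.
  intros Hc HF HG E2 L1 u Hu.
  assert (Ht1 : segment t1 t2 t1) by (unfold segment in *; lra).
  assert (Ht2 : segment t1 t2 t2) by (unfold segment in *; lra).
  pose proof (HF u t1 Hu Ht1). pose proof (HF t2 u Ht2 Hu).
  pose proof (Rabs_le_inv _ _ (HG u t1 Hu Ht1)) as B1.
  pose proof (Rabs_le_inv _ _ (HG t2 u Ht2 Hu)) as B2.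
  unfold segment in Hu.
  rewrite Rabs_pos_eq in B1, B2 by lra. lra.
Qed.

Lemma exists_near_in_segment t1 t2 t d :
  t1 < t2 -> segment t1 t2 t -> 0 < d ->
  exists u, segment t1 t2 u /\ u <> t /\ Rabs (u - t) < d.
Proof.
  unfold segment; intros Hlt Ht Hd.
  pose proof (Rmin_l d (t2 - t1)). pose proof (Rmin_r d (t2 - t1)).
  assert (0 < Rmin d (t2 - t1)) by (apply Rmin_pos; lra).
  destruct (Rlt_dec t ((t1 + t2) / 2)).
  - exists (t + Rmin d (t2 - t1) / 2). rewrite Rabs_pos_eq; repeat split; lra.
  - exists (t - Rmin d (t2 - t1) / 2). rewrite Rabs_left; repeat split; lra.
Qed.

Lemma NoDup_length_le_2 {T} (l : list T) : NoDup l ->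
  (forall a b c, In a l -> In b l -> In c l -> a <> b -> b <> c -> a <> c -> False) ->
  (length l <= 2)%nat.
Proof.
  destruct l as [|a [|b [|c l]]]; simpl; try lia. intros Hnd H; exfalso.
  inversion Hnd as [|? ? Ha Hnd1]; subst. inversion Hnd1 as [|? ? Hb _]; subst.
  apply (H a b c); simpl; auto; intros ->; simpl in *; tauto.
Qed.

Lemma exists_argmax (f : nat -> R) (S : list nat) : S <> [] ->
  exists k, In k S /\ forall m, In m S -> f m <= f k.
Proof.
  induction S as [|a S IH]; intros Hne; [congruence|].
  destruct S as [|b S'].
  - exists a; split; [now left|]. intros m [<-|[]]; lra.
  - destruct IH as [k [Hk Hm]]; [discriminate|].
    destruct (Rle_dec (f a) (f k)).
    + exists k; split; [now right|]. intros m [<-|Hm']; [lra|auto].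
    + exists a; split; [now left|]. intros m [<-|Hm']; [lra|].
      specialize (Hm m Hm'); lra.
Qed.

Definition time (tr : R * nat * nat) : R := fst (fst tr).
Definition involves (k : nat) (tr : R * nat * nat) : bool :=
  let '(_, s, p) := tr in (Nat.eqb s k || Nat.eqb p k)%bool.
Definition partner (k : nat) (tr : R * nat * nat) : nat :=
  let '(_, s, p) := tr in if Nat.eqb s k then p else s.

Section Envelope.

Variables (g : nat -> R -> R) (A : nat -> R) (J : R -> Prop) (U : list nat).
Hypothesis J_interval : is_interval J.
Hypothesis g_affine : forall k, In k U -> affine_on J (g k) (A k).
Hypothesis no_three_coincide : forall i j l t, In i U -> In j U -> In l U ->
  i <> j -> j <> l -> i <> l -> J t -> ~ (g i t = g j t /\ g j t = g l t).

Definition antipodal_tie (k q : nat) (t : R) : Prop :=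
  J t /\ g k t = - g q t /\ g k t <> 0 /\
  (forall m, In m U -> Rabs (g k t) <= Rabs (g m t)) /\
  exists d, d > 0 /\ forall u, J u -> u <> t -> Rabs (u - t) < d ->
    Rabs (g k u) <> Rabs (g q u).

Lemma antipodal_tie_sym k q t : antipodal_tie k q t -> antipodal_tie q k t.
Proof.
  intros (Jt & E & Hne & Hmin & d & Hd & Hiso). repeat split; auto; try lra.
  - intros m Hm. rewrite <- Rabs_Ropp, <- E. auto.
  - exists d; split; auto. intros u Ju Hu Hud C. exact (Hiso u Ju Hu Hud (eq_sym C)).
Qed.

Lemma antipodal_ties_same_sign_lt k q1 q2 t1 t2 :
  In k U -> In q1 U -> In q2 U ->
  Rabs (A q1) <= Rabs (A k) -> Rabs (A q2) <= Rabs (A k) ->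
  antipodal_tie k q1 t1 -> antipodal_tie k q2 t2 -> t1 < t2 ->
  0 < g k t1 * g k t2 -> False.
Proof.
  intros Hk Hq1 Hq2 Hs1 Hs2 (J1 & E1 & _ & M1 & d1 & Hd1 & I1)
    (J2 & E2 & _ & M2 & d2 & Hd2 & I2) Hlt Hsg.
  assert (HJ : forall u, segment t1 t2 u -> J u).
  { intros u Hu. exact (J_interval t1 u t2 J1 J2 Hu). }
  assert (Hseg : forall f a, affine_on J f a -> affine_on (segment t1 t2) f a).
  { intros f a Hf u v Hu Hv. exact (Hf u v (HJ u Hu) (HJ v Hv)). }
  assert (Ht1 : segment t1 t2 t1) by (unfold segment; lra).
  assert (Ht2 : segment t1 t2 t2) by (unfold segment; lra).
  destruct (affine_on_abs_same_sign (g k) (A k) t1 t2 (Hseg _ _ (g_affine k Hk)) Hsg)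
    as [c [Hc Habs]].
  assert (Hlip : forall q, In q U -> Rabs (A q) <= Rabs (A k) ->
    forall u v, segment t1 t2 u -> segment t1 t2 v ->
      Rabs (Rabs (g q u) - Rabs (g q v)) <= Rabs c * Rabs (u - v)).
  { intros q Hq Hsq u v Hu Hv. rewrite Hc.
    eapply Rle_trans; [exact (affine_on_abs_lipschitz _ _ _ u v (g_affine q Hq) (HJ u Hu) (HJ v Hv))|].
    apply Rmult_le_compat_r; [apply Rabs_pos|exact Hsq]. }
  (* depending on the sign of its slope, [|g k|] is pinned to [|g q1|] from [t1]
     or to [|g q2|] from [t2] *)
  destruct (Rle_dec 0 c) as [Hc0|Hc0].
  - assert (C : forall u, segment t1 t2 u -> Rabs (g k u) = Rabs (g q1 u)).
    { apply (affine_lipschitz_eq_forward _ _ c t1 t2 Hc0 Habs).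
      - intros u v Hu Hv. rewrite <- (Rabs_pos_eq c) by exact Hc0. auto.
      - rewrite E1, Rabs_Ropp. reflexivity.
      - exact (M2 q1 Hq1). }
    destruct (exists_near_in_segment t1 t2 t1 d1 Hlt Ht1 Hd1) as (u & Hu & Hne & Hud).
    exact (I1 u (HJ u Hu) Hne Hud (C u Hu)).
  - assert (C : forall u, segment t1 t2 u -> Rabs (g k u) = Rabs (g q2 u)).
    { apply (affine_lipschitz_eq_backward _ _ c t1 t2 ltac:(lra) Habs).
      - intros u v Hu Hv. rewrite <- (Rabs_left c) by lra. auto.
      - rewrite E2, Rabs_Ropp. reflexivity.
      - exact (M1 q2 Hq2). }
    destruct (exists_near_in_segment t1 t2 t2 d2 Hlt Ht2 Hd2) as (u & Hu & Hne & Hud).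
    exact (I2 u (HJ u Hu) Hne Hud (C u Hu)).
Qed.

Lemma antipodal_ties_same_sign_same_time k q1 q2 t1 t2 :
  In k U -> In q1 U -> In q2 U ->
  Rabs (A q1) <= Rabs (A k) -> Rabs (A q2) <= Rabs (A k) ->
  antipodal_tie k q1 t1 -> antipodal_tie k q2 t2 ->
  0 < g k t1 * g k t2 -> t1 = t2.
Proof.
  intros Hk Hq1 Hq2 Hs1 Hs2 T1 T2 Hsg.
  destruct (total_order_T t1 t2) as [[Hlt|Heq]|Hgt]; [exfalso| exact Heq |exfalso].
  - exact (antipodal_ties_same_sign_lt k q1 q2 t1 t2 Hk Hq1 Hq2 Hs1 Hs2 T1 T2 Hlt Hsg).
  - rewrite Rmult_comm in Hsg.
    exact (antipodal_ties_same_sign_lt k q2 q1 t2 t1 Hk Hq2 Hq1 Hs2 Hs1 T2 T1 Hgt Hsg).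
Qed.

Definition tie_triple (Ks : list nat) (tr : R * nat * nat) : Prop :=
  let '(t, s, p) := tr in (s < p)%nat /\ In s Ks /\ In p Ks /\ antipodal_tie s p t.

Lemma tie_triple_partner Ks k tr : tie_triple Ks tr -> involves k tr = true ->
  In (partner k tr) Ks /\ antipodal_tie k (partner k tr) (time tr).
Proof.
  destruct tr as [[t s] p]; simpl. intros (_ & Hs & Hp & T) Hi.
  destruct (Nat.eqb_spec s k) as [->|]; [auto|].
  destruct (Nat.eqb_spec p k) as [->|]; [|discriminate].
  split; [exact Hs|exact (antipodal_tie_sym _ _ _ T)].
Qed.

Lemma tie_triple_eq_of_partner Ks k a b : tie_triple Ks a -> tie_triple Ks b ->
  involves k a = true -> involves k b = true ->
  time a = time b -> partner k a = partner k b -> a = b.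
Proof.
  destruct a as [[t s] p], b as [[t' s'] p']; unfold time; simpl.
  intros [Hl _] [Hl' _] Ha Hb -> Hp.
  destruct (Nat.eqb_spec s k), (Nat.eqb_spec p k); simpl in Ha;
  destruct (Nat.eqb_spec s' k), (Nat.eqb_spec p' k); simpl in Hb;
  try discriminate; assert (s = s' /\ p = p') as [-> ->] by lia; reflexivity.
Qed.

Section Steepest.

Variables (Ks : list nat) (k : nat).
Hypothesis Ks_in_U : incl Ks U.
Hypothesis k_in_Ks : In k Ks.
Hypothesis k_steepest : forall q, In q Ks -> Rabs (A q) <= Rabs (A k).

Lemma tie_triples_of_one_sign_le_2 (sg : R) (P : list (R * nat * nat)) : NoDup P ->
  (forall tr, In tr P -> tie_triple Ks tr /\ involves k tr = true /\ 0 < sg * g k (time tr)) ->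
  (length P <= 2)%nat.
Proof.
  intros HP HPl.
  assert (Htie : forall tr, In tr P ->
    In (partner k tr) Ks /\ antipodal_tie k (partner k tr) (time tr)).
  { intros tr Htr. destruct (HPl tr Htr) as (T & Hi & _). exact (tie_triple_partner _ _ _ T Hi). }
  assert (Htime : forall a b, In a P -> In b P -> time a = time b).
  { intros a b Ha Hb.
    destruct (Htie a Ha) as [Qa Ta], (Htie b Hb) as [Qb Tb].
    destruct (HPl a Ha) as (_ & _ & Sa), (HPl b Hb) as (_ & _ & Sb).
    apply (antipodal_ties_same_sign_same_time k _ _ _ _ (Ks_in_U k k_in_Ks)
      (Ks_in_U _ Qa) (Ks_in_U _ Qb) (k_steepest _ Qa) (k_steepest _ Qb) Ta Tb).
    pose proof (Rmult_lt_0_compat _ _ Sa Sb). nra. }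
  assert (Hpartner : forall a b, In a P -> In b P -> a <> b -> partner k a <> partner k b).
  { intros a b Ha Hb Hab E. apply Hab.
    destruct (HPl a Ha) as (Ta & Ia & _), (HPl b Hb) as (Tb & Ib & _).
    exact (tie_triple_eq_of_partner _ _ _ _ Ta Tb Ia Ib (Htime a b Ha Hb) E). }
  apply NoDup_length_le_2; [exact HP|]. intros a b c Ha Hb Hc Nab Nbc Nac.
  destruct (Htie a Ha) as (Qa & Ja & Ea & _), (Htie b Hb) as (Qb & _ & Eb & _),
    (Htie c Hc) as (Qc & _ & Ec & _).
  rewrite (Htime b a Hb Ha) in Eb. rewrite (Htime c a Hc Ha) in Ec.
  apply (no_three_coincide _ _ _ (time a) (Ks_in_U _ Qa) (Ks_in_U _ Qb) (Ks_in_U _ Qc)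
    (Hpartner a b Ha Hb Nab) (Hpartner b c Hb Hc Nbc) (Hpartner a c Ha Hc Nac) Ja).
  split; lra.
Qed.

Lemma tie_triples_involving_le_4 (l : list (R * nat * nat)) : NoDup l ->
  (forall tr, In tr l -> tie_triple Ks tr) -> (length (filter (involves k) l) <= 4)%nat.
Proof.
  intros Hl Hties.
  set (positive := fun tr => if Rlt_dec 0 (g k (time tr)) then true else false).
  rewrite <- (filter_length positive).
  assert (Hsign : forall (b : bool) tr, In tr (filter (involves k) l) ->
    (if b then positive tr else negb (positive tr)) = true ->
    tie_triple Ks tr /\ involves k tr = true /\ 0 < (if b then 1 else -1) * g k (time tr)).
  { intros b tr Htr Hb. apply filter_In in Htr as [Htr Hi].
    destruct (tie_triple_partner _ _ _ (Hties tr Htr) Hi) as [_ (_ & _ & Hne & _)].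
    do 2 (split; auto). unfold positive in Hb.
    destruct b, (Rlt_dec 0 (g k (time tr))); simpl in Hb; try discriminate; lra. }
  pose proof (tie_triples_of_one_sign_le_2 1 (filter positive (filter (involves k) l))
    (NoDup_filter _ (NoDup_filter _ Hl))
    (fun tr Htr => let (Hin, Hp) := proj1 (filter_In _ _ _) Htr in Hsign true tr Hin Hp)).
  pose proof (tie_triples_of_one_sign_le_2 (-1)
    (filter (fun tr => negb (positive tr)) (filter (involves k) l))
    (NoDup_filter _ (NoDup_filter _ Hl))
    (fun tr Htr => let (Hin, Hp) := proj1 (filter_In _ _ _) Htr in Hsign false tr Hin Hp)).
  lia.
Qed.

End Steepest.

Lemma tie_triples_length_le (Ks : list nat) (l : list (R * nat * nat)) : incl Ks U ->
  NoDup l -> (forall tr, In tr l -> tie_triple Ks tr) -> (length l <= 4 * length Ks)%nat.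
Proof.
  revert l; induction Ks as [Ks IH] using (induction_ltof1 _ (@length nat)).
  intros l HKs Hl Hties.
  destruct Ks as [|k0 Ks0].
  - destruct l as [|[[t s] p] l]; [simpl; lia|].
    destruct (Hties _ (or_introl eq_refl)) as (_ & [] & _).
  - destruct (exists_argmax (fun q => Rabs (A q)) (k0 :: Ks0) ltac:(discriminate))
      as [k [Hk Hmax]].
    set (Ks' := remove Nat.eq_dec k (k0 :: Ks0)).
    assert (Hshorter : (length Ks' < length (k0 :: Ks0))%nat) by apply remove_length_lt, Hk.
    assert (Hrest : (length (filter (fun tr => negb (involves k tr)) l) <= 4 * length Ks')%nat).
    { apply IH; [exact Hshorter| |apply NoDup_filter, Hl|].
      - intros q Hq. apply HKs, (in_remove _ _ _ _ Hq).
      - intros [[t s] p] Htr. apply filter_In in Htr as [Htr Hi].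
        destruct (Hties _ Htr) as (Hsp & Hs & Hp & T). simpl in Hi.
        destruct (Nat.eqb_spec s k), (Nat.eqb_spec p k); try discriminate.
        refine (conj Hsp (conj _ (conj _ T))); apply in_in_remove; auto. }
    pose proof (tie_triples_involving_le_4 _ _ HKs Hk Hmax l Hl Hties).
    rewrite <- (filter_length (involves k) l). lia.
Qed.
End Envelope.

Lemma increasing_times_le ts tau : increasing_times ts tau ->
  forall i j, (i <= j <= tau)%nat -> ts i <= ts j.
Proof.
  intros Hts i j [Hij Hj]. induction Hij as [|j Hij IH]; [lra|].
  pose proof (Hts j ltac:(lia)). specialize (IH ltac:(lia)). lra.
Qed.

Lemma elementary_interval_in_dom n x ts tau Jel : increasing_times ts tau ->
  elementary_interval n x ts tau Jel -> forall t, Jel t -> in_dom ts tau t.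
Proof.
  intros Hts (i & Hi & _ & Hsub & _) t Jt. destruct (Hsub t Jt).
  pose proof (increasing_times_le ts tau Hts 0 i ltac:(lia)).
  pose proof (increasing_times_le ts tau Hts (S i) tau ltac:(lia)).
  unfold in_dom; lra.
Qed.

(* Without choice: a chord through two points of [J] serves as the common slope. *)
Lemma affine_slopes_exist (J : R -> Prop) (f : nat -> R -> R) (U : list nat) :
  (forall k, In k U -> exists a b, forall t, J t -> f k t = a * t + b) ->
  exists A : nat -> R, forall k, In k U -> affine_on J (f k) (A k).
Proof.
  intros Hlin.
  destruct (classic (exists u0 u1, J u0 /\ J u1 /\ u0 < u1))
    as [(u0 & u1 & J0 & J1 & Hlt)|Hno].
  - exists (fun k => (f k u1 - f k u0) / (u1 - u0)). intros k Hk u v Ju Jv.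
    destruct (Hlin k Hk) as (a & b & Hab).
    rewrite (Hab u Ju), (Hab v Jv), (Hab u0 J0), (Hab u1 J1). field. lra.
  - exists (fun _ => 0). intros k _ u v Ju Jv.
    destruct (total_order_T u v) as [[Hlt| ->]|Hgt]; [exfalso|ring|exfalso];
      apply Hno; eauto.
Qed.

Definition centered (n : nat) (x : nat -> R -> R) (k : nat) (t : R) : R :=
  x k t - Icurve n x t.

Lemma elementary_interval_centered_affine n x ts tau Jel :
  piecewise_linear n x ts tau -> elementary_interval n x ts tau Jel ->
  exists A : nat -> R, forall k, In k (seq 0 n) -> affine_on Jel (centered n x k) (A k).
Proof.
  intros Hpl (i & Hi & _ & Hsub & (a0 & b0 & HI) & _).
  apply affine_slopes_exist. intros k Hk. apply in_seq in Hk.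
  destruct (Hpl k i ltac:(lia) Hi) as (a & b & Hab).
  exists (a - a0), (b - b0). intros t Jt. unfold centered.
  rewrite (Hab t (Hsub t Jt)), (HI t Jt). ring.
Qed.

Lemma general_position_centered n x eps ts tau Jel :
  increasing_times ts tau -> general_position n x eps ts tau ->
  elementary_interval n x ts tau Jel ->
  forall i j l t, In i (seq 0 n) -> In j (seq 0 n) -> In l (seq 0 n) ->
    i <> j -> j <> l -> i <> l -> Jel t ->
    ~ (centered n x i t = centered n x j t /\ centered n x j t = centered n x l t).
Proof.
  intros Hts [Hgp3 _] HJel i j l t Hi Hj Hl Hij Hjl Hil Jt [E1 E2].
  apply in_seq in Hi, Hj, Hl.
  apply (Hgp3 i j l t ltac:(lia) ltac:(lia) ltac:(lia) Hij Hjl Hil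
    (elementary_interval_in_dom n x ts tau Jel Hts HJel t Jt)).
  unfold centered in E1, E2. split; lra.
Qed.

Lemma eps_connected_sym n x eps t a b :
  eps_connected n x eps t a b -> eps_connected n x eps t b a.
Proof.
  induction 1 as [a b (Ha & Hb & Hab)| |]; [|apply rt_refl|eapply rt_trans; eauto].
  apply rt_step. repeat split; auto. rewrite Rabs_minus_sym; exact Hab.
Qed.

(* A chain from [a] to [b] with steps at most [eps] passes within [eps] of every
   position between [x a t] and [x b t]. *)
Lemma eps_connected_between n x eps t a b m : 0 <= eps ->
  (a < n)%nat -> (m < n)%nat -> eps_connected n x eps t a b ->
  (x a t <= x m t <= x b t \/ x b t <= x m t <= x a t) ->
  eps_connected n x eps t a m.
Proof.
  intros Heps Ha Hm Hab. apply clos_rt_rt1n in Hab. revert Ha.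
  induction Hab as [a|a c b (_ & Hc & Hac) _ IH]; intros Ha Hbet.
  - apply rt_step. repeat split; auto. apply Rabs_le. lra.
  - destruct (Rle_dec (Rabs (x a t - x m t)) eps) as [Hclose|Hfar].
    + apply rt_step. repeat split; auto.
    + apply rt_trans with c; [apply rt_step; repeat split; auto|].
      apply IH; [exact Hc|].
      apply Rnot_le_lt in Hfar. apply Rabs_le_inv in Hac.
      revert Hfar. unfold Rabs; destruct (Rcase_abs (x a t - x m t)); intros; lra.
Qed.

Lemma type_ii_break_point_global_min n x eps (J : R -> Prop) X t s p : 0 <= eps ->
  is_class n x eps t X -> break_point n x X J t s p ->
  centered n x s t = - centered n x p t ->
  forall m, (m < n)%nat -> Rabs (centered n x s t) <= Rabs (centered n x m t).
Proof.
  intros Heps (s0 & _ & HX) (_ & Xs & Xp & _ & _ & Hmin) E m Hm.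
  destruct (Rle_dec (Rabs (centered n x s t)) (Rabs (centered n x m t))) as [H|H];
    [exact H|exfalso].
  apply HX in Xs as [Hs Hs0s]. apply HX in Xp as [Hp Hs0p].
  (* [m] is strictly closer to [I t] than [s] and [p], hence lies between them *)
  assert (Hbet : x s t <= x m t <= x p t \/ x p t <= x m t <= x s t).
  { revert H E. unfold centered, Rabs.
    destruct (Rcase_abs (x s t - Icurve n x t)), (Rcase_abs (x m t - Icurve n x t));
      intros; lra. }
  assert (Hsm : eps_connected n x eps t s m).
  { apply (eps_connected_between n x eps t s p m Heps Hs Hm); [|exact Hbet].
    eapply rt_trans; [apply eps_connected_sym, Hs0s|exact Hs0p]. }
  assert (Xm : X m) by (apply HX; split; [exact Hm|exact (rt_trans _ _ _ _ _ Hs0s Hsm)]).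
  specialize (Hmin m Xm). unfold fdist, centered in *. lra.
Qed.

Lemma type_ii_break_is_antipodal_tie n x eps ts tau Jel t s p : 0 <= eps ->
  increasing_times ts tau -> elementary_interval n x ts tau Jel -> Jel t ->
  type_ii_break_of_some_envelope n x eps ts tau t s p ->
  In s (seq 0 n) /\ In p (seq 0 n) /\ antipodal_tie (centered n x) Jel (seq 0 n) s p t.
Proof.
  intros Heps Hts HJel Jt (X & J & (_ & _ & Hcl & _) & Hbp & E & Hne & d & Hd & Hiso).
  pose proof Hbp as (_ & Xs & Xp & Jt' & _).
  destruct (Hcl t Jt') as [_ Hclass].
  pose proof Hclass as (s0 & _ & HX).
  pose proof (proj1 (proj1 (HX s) Xs)) as Hs. pose proof (proj1 (proj1 (HX p) Xp)) as Hp.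
  split; [apply in_seq; lia|]. split; [apply in_seq; lia|].
  refine (conj Jt (conj E (conj Hne (conj _ _)))).
  - intros m Hm. apply in_seq in Hm.
    exact (type_ii_break_point_global_min n x eps J X t s p Heps Hclass Hbp E m
      ltac:(lia)).
  - exists d. split; [exact Hd|]. intros u Ju.
    exact (Hiso u (elementary_interval_in_dom n x ts tau Jel Hts HJel u Ju)).
Qed.

Theorem mainTheorem5 (n : nat) (x : nat -> R -> R) (eps : R)
  (ts : nat -> R) (tau : nat)
  (Hn : (0 < n)%nat) (Heps : eps > 0)
  (Hts : increasing_times ts tau)
  (Hpl : piecewise_linear n x ts tau)
  (Hgp : general_position n x eps ts tau)
  (Jel : R -> Prop) (HJel : elementary_interval n x ts tau Jel)
  (bps : list (R * nat * nat))
  (Hnd : NoDup bps)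
  (Hbps : forall t s p, In (t, s, p) bps ->
     (s < p)%nat /\ Jel t /\ type_ii_break_of_some_envelope n x eps ts tau t s p) :
  INR (length bps) <= 13 / 2 * INR n.
Proof.
  destruct (elementary_interval_centered_affine n x ts tau Jel Hpl HJel) as [A Haff].
  assert (HJint : is_interval Jel) by (destruct HJel as (? & ? & ? & _); assumption).
  assert (Hties : forall tr, In tr bps -> tie_triple (centered n x) Jel (seq 0 n) (seq 0 n) tr).
  { intros [[t s] p] Htr. destruct (Hbps t s p Htr) as (Hsp & Jt & Hb).
    destruct (type_ii_break_is_antipodal_tie n x eps ts tau Jel t s p ltac:(lra) Hts HJel Jt Hb)
      as (Hs & Hp & T).
    exact (conj Hsp (conj Hs (conj Hp T))). }
  pose proof (tie_triples_length_le (centered n x) A Jel (seq 0 n) HJint Haff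
    (general_position_centered n x eps ts tau Jel Hts Hgp HJel)
    (seq 0 n) bps (incl_refl _) Hnd Hties) as Hcount.
  rewrite length_seq in Hcount. apply le_INR in Hcount. rewrite mult_INR in Hcount.
  simpl in Hcount. pose proof (pos_INR n). lra.
Qed.
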